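(* Let $\mathbb{F}$ be a finite field, $G\subseteq\mathbb{F}$, $m,k\in\mathbb{N}$, and $d,d'\in\mathbb{N}$ with $d'\ge2(|G|-1)$. Let $Q\subseteq\mathbb{F}^{m+k}$ with $|Q|<|G|^k$, and let $Z$ be uniformly random in $\mathbb{F}^{\le d,\le d'}[X_1,\dots,X_m,Y_1,\dots,Y_k]$. Then the random vectors $\big(\sum_{\vec y\in G^k}Z(\vec\alpha,\vec y)\big)_{\vec\alpha\in\mathbb{F}^m}$ and $\big(Z(\vec q)\big)_{\vec q\in Q}$ are statistically independent.
   Context: $\mathbb{F}^{\le d,\le d'}[X_1,\dots,X_m,Y_1,\dots,Y_k]$ denotes the set of $(m+k)$-variate polynomials over $\mathbb{F}$ of individual degree at most $d$ in each of $X_1,\dots,X_m$ and at most $d'$ in each of $Y_1,\dots,Y_k$. *)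

From HB Require Import structures.
From mathcomp Require Import all_boot all_order all_algebra.
Set Implicit Arguments. Unset Strict Implicit. Unset Printing Implicit Defensive.
Import GRing.Theory.
Local Open Scope ring_scope.

(* Exponent vectors of monomials X^e * Y^f with e_i <= d, f_j <= d'. *)
Definition expo (m k d d' : nat) : finType :=
  ({ffun 'I_m -> 'I_d.+1} * {ffun 'I_k -> 'I_d'.+1})%type.

(* F^{<=d,<=d'}[X_1..X_m,Y_1..Y_k]: a polynomial is identified with its
   (unique) coefficient vector indexed by the allowed exponent vectors. *)
Definition mpoly (F : finFieldType) (m k d d' : nat) : finType :=
  {ffun expo m k d d' -> F}.

Definition meval (F : finFieldType) (m k d d' : nat) (Z : mpoly F m k d d')
    (x : {ffun 'I_m -> F}) (y : {ffun 'I_k -> F}) : F :=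
  \sum_(e : expo m k d d')
     Z e * (\prod_(i < m) x i ^+ e.1 i) * (\prod_(j < k) y j ^+ e.2 j).

Definition cube (F : finFieldType) (k : nat) (G : {set F}) :
    {set {ffun 'I_k -> F}} :=
  [set y : {ffun 'I_k -> F} | [forall j, y j \in G]].

(* Statistical independence of random variables X, Y defined on a finite
   sample space Omega equipped with the uniform distribution:
   Pr[X = x /\ Y = y] = Pr[X = x] * Pr[Y = y] for all x, y
   (multiplied through by #|Omega|^2). *)
Definition indep_unif (Omega : finType) (T1 T2 : eqType)
    (X : Omega -> T1) (Y : Omega -> T2) : Prop :=
  forall (x : T1) (y : T2),
    (#|[set w | (X w == x) && (Y w == y)]| * #|Omega| =
     #|[set w | X w == x]| * #|[set w | Y w == y]|)%N.

From HB Require Import structures.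
From mathcomp Require Import all_boot all_order all_algebra.
From mathcomp Require Import ring zify.
Set Implicit Arguments. Unset Strict Implicit. Unset Printing Implicit Defensive.
Import GRing.Theory.
Local Open Scope ring_scope.

(* The two random vectors are linear images A Z and B Z of the uniform Z, and
   linear maps A, B on a finite space are independent as soon as A (ker B) is
   all of the image of A. So it suffices to find, for every Z, some Z' with the
   same sums over G^k that vanishes on Q. As |Q| < |G|^k, a nontrivial
   combination h of the Lagrange products of the grid G^k vanishes on the
   Y-parts of Q; multiplying h by the Lagrange product of a grid point where h
   is nonzero, and normalizing, gives g(Y) of individual degree
   2(|G| - 1) <= d' that vanishes on Q and sums to 1 over G^k. Then
   Z' = (sum over G^k of Z)(X) * g(Y). *)

Section IndepZmodMorphism.

Variables (T : finType) (R : finZmodType) (U1 U2 : zmodType).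
Variables (A : {ffun T -> R} -> U1) (B : {ffun T -> R} -> U2).
Hypotheses (A_morph : GRing.zmod_morphism A) (B_morph : GRing.zmod_morphism B).

Lemma card_fiber_translate (P : pred {ffun T -> R}) t :
    (forall w, P (w - t) = P w) ->
  #|[set w | P w && (B w == B t)]| = #|[set w | P w && (B w == 0%R)]|.
Proof.
move=> Pt; rewrite -[RHS](card_preimset _ (subIr t)); apply: eq_card => w.
by rewrite !inE Pt B_morph subr_eq0.
Qed.

Hypothesis A_kerB : forall w, exists2 w', A w' = A w & B w' = 0.

Lemma kerA_meets_fiberB w : exists2 t, A t = 0 & B t = B w.
Proof.
have [w' Aw' Bw'] := A_kerB w.
exists (w - w'); first by rewrite A_morph Aw' subrr.
by rewrite B_morph Bw' subr0.
Qed.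

(* Double count the pairs (w, w') with P w' and B w' = B w: each fiber of B
   meets ker A, so its P-part is a translate of the P-part of ker B. *)
Lemma card_mul_kerB (P : pred {ffun T -> R}) :
    (forall t w, A t = 0 -> P (w - t) = P w) ->
  (#|[set w | P w]| * #|[set w | B w == 0%R]| =
   #|{ffun T -> R}| * #|[set w | P w && (B w == 0%R)]|)%N.
Proof.
move=> P_inv.
have fiberB w' : #|[set w | B w == B w']| = #|[set w | B w == 0%R]|.
  exact: (@card_fiber_translate (fun=> true) w' (fun=> erefl)).
have fiberPB w :
    #|[set w' | P w' && (B w' == B w)]| = #|[set w' | P w' && (B w' == 0%R)]|.
  have [t At <-] := kerA_meets_fiberB w.
  by apply: card_fiber_translate => w'; apply: P_inv.
transitivity (\sum_w' \sum_w ((P w' && (B w == B w')) : nat)).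
  rewrite -sum1dep_card big_distrl /= big_mkcond /=; apply: eq_bigr => w' _.
  case: (P w') => /=; last by rewrite big1.
  by rewrite mul1n -(fiberB w') -sum1dep_card big_mkcond.
rewrite exchange_big /= -sum_nat_const.
apply: eq_bigr => w _; rewrite -(fiberPB w) -sum1dep_card [RHS]big_mkcond.
by apply: eq_bigr => w' _; rewrite eq_sym.
Qed.

Lemma indep_unif_zmod_morphism : indep_unif A B.
Proof.
move=> x y.
have A_inv t w : A t = 0 -> (A (w - t) == x) = (A w == x).
  by move=> At; rewrite A_morph At subr0.
have [w0 /eqP <- | no_y] := pickP (fun w => B w == y); last first.
  have -> : [set w | B w == y] = set0 by apply/setP => w; rewrite !inE no_y.
  have -> : [set w | (A w == x) && (B w == y)] = set0.
    by apply/setP => w; rewrite !inE no_y andbF.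
  by rewrite cards0 !muln0.
have [t At <-] := kerA_meets_fiberB w0.
rewrite (card_fiber_translate (P := fun w => A w == x)) => [|w]; last exact: A_inv.
rewrite (@card_fiber_translate (fun=> true)) // mulnC.
by rewrite -card_mul_kerB // => t' w At'; apply: A_inv.
Qed.

End IndepZmodMorphism.

Definition mpeval (R : nzRingType) (n D : nat)
    (c : {ffun {ffun 'I_n -> 'I_D.+1} -> R}) (x : {ffun 'I_n -> R}) : R :=
  \sum_f c f * \prod_(i < n) x i ^+ f i.

Section MpevalTheory.

Variables (R : comNzRingType) (n D : nat).

Lemma mpeval_sum (I : finType) (P : pred I)
    (c : I -> {ffun {ffun 'I_n -> 'I_D.+1} -> R}) x :
  mpeval (\sum_(i | P i) c i) x = \sum_(i | P i) mpeval (c i) x.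
Proof.
rewrite /mpeval exchange_big; apply: eq_bigr => f _.
by rewrite sum_ffunE big_distrl.
Qed.

Lemma mpevalZ (a : R) (h : {ffun 'I_n -> 'I_D.+1} -> R) x :
  mpeval [ffun f => a * h f] x = a * mpeval [ffun f => h f] x.
Proof.
by rewrite /mpeval big_distrr /=; apply: eq_bigr => f _; rewrite !ffunE mulrA.
Qed.

Lemma mpeval_prod (u : 'I_n -> {poly R}) x :
    (forall i, size (u i) <= D.+1)%N ->
  mpeval [ffun f : {ffun 'I_n -> 'I_D.+1} => \prod_i (u i)`_(f i)] x =
  \prod_i (u i).[x i].
Proof.
move=> size_u; rewrite /mpeval.
rewrite (eq_bigr (fun f : {ffun 'I_n -> 'I_D.+1} =>
  \prod_i ((u i)`_(f i) * x i ^+ f i))); last first.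
  by move=> f _; rewrite ffunE big_split.
rewrite -(bigA_distr_bigA (fun i (j : 'I_D.+1) => (u i)`_j * x i ^+ j)).
by apply: eq_bigr => i _; rewrite (horner_coef_wide _ (size_u i)).
Qed.

End MpevalTheory.

Section MevalTheory.

Variables (F : finFieldType) (m k d d' : nat).
Implicit Type Z : mpoly F m k d d'.

Lemma mevalB Z1 Z2 x y :
  meval (Z1 - Z2 : mpoly F m k d d') x y = meval Z1 x y - meval Z2 x y.
Proof. by rewrite /meval -sumrB; apply: eq_bigr => e _; rewrite !ffunE; ring. Qed.

Lemma meval_split Z x y :
  meval Z x y = mpeval [ffun e1 => mpeval [ffun f => Z (e1, f)] y] x.
Proof.
rewrite /meval /mpeval.
transitivity (\sum_e1 \sum_f
    Z (e1, f) * (\prod_(i < m) x i ^+ e1 i) * (\prod_(j < k) y j ^+ f j)).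
  by rewrite pair_bigA; apply: eq_bigr => -[].
apply: eq_bigr => e1 _; rewrite ffunE big_distrl /=.
by apply: eq_bigr => f _; rewrite ffunE; ring.
Qed.

Lemma meval_tensor (a : {ffun {ffun 'I_m -> 'I_d.+1} -> F})
    (b : {ffun {ffun 'I_k -> 'I_d'.+1} -> F}) x y :
  meval ([ffun e => a e.1 * b e.2] : mpoly F m k d d') x y = mpeval a x * mpeval b y.
Proof.
rewrite meval_split /mpeval big_distrl /=; apply: eq_bigr => e1 _.
rewrite ffunE big_distrl big_distrr /=; apply: eq_bigr => f _.
by rewrite !ffunE /=; ring.
Qed.

Definition cube_sum_coef (G : {set F}) Z : {ffun {ffun 'I_m -> 'I_d.+1} -> F} :=
  \sum_(y in cube k G) [ffun e1 => mpeval [ffun f => Z (e1, f)] y].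

Lemma sum_cube_meval G Z x :
  \sum_(y in cube k G) meval Z x y = mpeval (cube_sum_coef G Z) x.
Proof.
rewrite mpeval_sum; apply: eq_bigr => y _.
by rewrite meval_split.
Qed.

End MevalTheory.

Lemma exists_nonzero_vanishing_combination (F : finFieldType) (I Y : finType)
    (f : I -> Y -> F) (S : {set Y}) :
    (#|S| < #|I|)%N ->
  exists2 c : {ffun I -> F}, c != 0 & {in S, forall s, \sum_i c i * f i s = 0}.
Proof.
move=> S_lt_I.
pose restr (c : {ffun I -> F}) := [ffun s : {s | s \in S} => \sum_i c i * f i (val s)].
have /injectivePn [c1 [c2 c12 restr12]] : ~~ injectiveb restr.
  apply/injectiveP => /leq_card; rewrite !card_ffun card_sig leq_exp2l.
    by rewrite leqNgt (eq_card (fun s => erefl (s \in S))) S_lt_I.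
  exact: card_finNzRing_gt1.
exists (c1 - c2); first by rewrite subr_eq0.
move=> s sS; have /ffunP/(_ (exist _ s sS)) := restr12; rewrite !ffunE /= => eq12.
rewrite (eq_bigr (fun i => c1 i * f i s - c2 i * f i s)); last first.
  by move=> i _; rewrite !ffunE mulrBl.
by rewrite sumrB eq12 subrr.
Qed.

Definition lagrange (F : finFieldType) (G : {set F}) (a : F) : {poly F} :=
  (\prod_(b in G :\ a) (a - b))^-1 *: \prod_(b in G :\ a) ('X - b%:P).

Section LagrangeNodes.

Variables (F : finFieldType) (G : {set F}).

Lemma lagrange_node a t : t \in G -> (lagrange G a).[t] = (t == a)%:R.
Proof.
move=> tG; rewrite hornerZ horner_prod.
under [X in _ * X]eq_bigr do rewrite hornerXsubC.
have [->|ta] := eqVneq t a.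
  rewrite mulVf //; apply/prodf_neq0 => b; rewrite !inE subr_eq0 eq_sym.
  by case/andP.
rewrite [X in _ * X](bigD1 t) /=; last by rewrite !inE ta.
by rewrite subrr mul0r mulr0.
Qed.

Lemma size_lagrange a : a \in G -> (size (lagrange G a) <= #|G|)%N.
Proof.
move=> aG; apply: leq_trans (size_scale_leq _ _) _.
by rewrite -big_enum size_prod_XsubC -cardE (cardsD1 a G) aG.
Qed.

Lemma size_lagrangeM D a b : (2 * (#|G| - 1) <= D)%N -> a \in G -> b \in G ->
  (size (lagrange G a * lagrange G b)%R <= D.+1)%N.
Proof.
move=> hD aG bG; apply: leq_trans (size_polyMleq _ _) _.
have := size_lagrange aG; have := size_lagrange bG.
have : (0 < #|G|)%N by apply/card_gt0P; exists a.
lia.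
Qed.

Variable k : nat.
Local Notation node := {ffun 'I_k -> {x : F | x \in G}}.

Definition node_point (p : node) : {ffun 'I_k -> F} := [ffun j => val (p j)].

Definition lagrange_prod (p : node) (y : {ffun 'I_k -> F}) : F :=
  \prod_j (lagrange G (val (p j))).[y j].

Lemma card_node : #|{: node}| = (#|G| ^ k)%N.
Proof. by rewrite card_ffun card_sig card_ord. Qed.

Lemma node_point_cube p : node_point p \in cube k G.
Proof. by rewrite inE; apply/forallP => j; rewrite ffunE (valP (p j)). Qed.

Lemma node_point_inj : injective node_point.
Proof.
move=> p1 p2 /ffunP eq12; apply/ffunP => j; apply: val_inj.
by have := eq12 j; rewrite !ffunE.
Qed.

Lemma lagrange_prod_cube p y :
  y \in cube k G -> lagrange_prod p y = (y == node_point p)%:R.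
Proof.
rewrite inE => /forallP yG; rewrite /lagrange_prod.
under eq_bigr do rewrite lagrange_node ?yG //.
have [->|y_neq] := eqVneq y (node_point p).
  by rewrite big1 // => j _; rewrite ffunE eqxx.
have [j yj] : exists j, y j != val (p j).
  apply/existsP; apply: contraNT y_neq => /existsPn y_eq.
  by apply/eqP/ffunP => j; rewrite ffunE; apply/eqP/negbNE/y_eq.
by rewrite (bigD1 j) //= (negbTE yj) mul0r.
Qed.

Lemma lagrange_comb_node (c : node -> F) p0 :
  \sum_p c p * lagrange_prod p (node_point p0) = c p0.
Proof.
rewrite (bigD1 p0) //= big1 => [|p p_neq].
  by rewrite lagrange_prod_cube ?node_point_cube // eqxx mulr1 addr0.
rewrite lagrange_prod_cube ?node_point_cube // (inj_eq node_point_inj) eq_sym.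
by rewrite (negbTE p_neq) mulr0.
Qed.

End LagrangeNodes.

Lemma exists_vanishing_poly_cube_sum1 (F : finFieldType) (G : {set F}) (k D : nat)
    (S : {set {ffun 'I_k -> F}}) :
    (2 * (#|G| - 1) <= D)%N -> (#|S| < #|G| ^ k)%N ->
  exists2 g : {ffun {ffun 'I_k -> 'I_D.+1} -> F},
    {in S, forall y, mpeval g y = 0} & \sum_(y in cube k G) mpeval g y = 1.
Proof.
move=> hD hS.
have [|c c_neq0 c_S] :=
  exists_nonzero_vanishing_combination (@lagrange_prod F G k) (S := S).
  by rewrite card_node.
have [p0 cp0] : exists p0, c p0 != 0.
  apply/existsP; apply: contraNT c_neq0 => /existsPn c0.
  by apply/eqP/ffunP => p; rewrite ffunE; apply/eqP/negbNE/c0.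
pose u (p : {ffun 'I_k -> {x : F | x \in G}}) j :=
  lagrange G (val (p j)) * lagrange G (val (p0 j)).
pose g := \sum_p
  [ffun f : {ffun 'I_k -> 'I_D.+1} => c p / c p0 * \prod_j (u p j)`_(f j)].
have g_eval y :
    mpeval g y = (\sum_p c p * lagrange_prod p y) * lagrange_prod p0 y / c p0.
  rewrite mpeval_sum big_distrl big_distrl /=; apply: eq_bigr => p _.
  rewrite mpevalZ mpeval_prod => [|j]; last exact: size_lagrangeM (valP _) (valP _).
  under eq_bigr do rewrite hornerM.
  by rewrite big_split /lagrange_prod /=; ring.
exists g => [y yS|]; first by rewrite g_eval c_S // !mul0r.
under eq_bigr do rewrite g_eval.
rewrite (bigD1 (node_point p0)) ?node_point_cube //=.
rewrite [X in _ + X]big1 ?addr0; last first.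
  move=> y /andP [yG y_neq].
  by rewrite lagrange_prod_cube // (negbTE y_neq) mulr0 mul0r.
rewrite lagrange_comb_node lagrange_prod_cube ?node_point_cube //.
by rewrite eqxx mulr1 divff.
Qed.

Theorem corollary8p3 (F : finFieldType) (G : {set F}) (m k d d' : nat)
    (hd' : (2 * (#|G| - 1) <= d')%N)
    (Q : {set ({ffun 'I_m -> F} * {ffun 'I_k -> F})})
    (hQ : (#|Q| < #|G| ^ k)%N) :
  indep_unif
    (fun Z : mpoly F m k d d' =>
       [ffun alpha : {ffun 'I_m -> F} =>
          \sum_(y in cube k G) meval Z alpha y])
    (fun Z : mpoly F m k d d' =>
       [ffun q : {q : ({ffun 'I_m -> F} * {ffun 'I_k -> F}) | q \in Q} =>
          meval Z (val q).1 (val q).2]).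
Proof.
pose S := [set q.2 | q in Q].
have S_small : (#|S| < #|G| ^ k)%N := leq_ltn_trans (leq_imset_card _ _) hQ.
have [g g_S g_cube] := exists_vanishing_poly_cube_sum1 hd' S_small.
apply: indep_unif_zmod_morphism => [Z1 Z2 | Z1 Z2 | Z].
- apply/ffunP => alpha; rewrite !ffunE -sumrB.
  by apply: eq_bigr => y _; rewrite mevalB.
- by apply/ffunP => q; rewrite !ffunE mevalB.
exists [ffun e => cube_sum_coef G Z e.1 * g e.2].
- apply/ffunP => alpha; rewrite !ffunE [RHS]sum_cube_meval.
  under eq_bigr do rewrite meval_tensor.
  by rewrite -big_distrr /= g_cube mulr1.
- apply/ffunP => q; rewrite !ffunE meval_tensor g_S ?mulr0 //.
  by apply/imsetP; exists (val q) => //; exact: valP.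
Qed.
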